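(* Let $(X,d)$ be a compact metric space with $\operatorname{diam}(X,d)=1/2$, with hyperbolic filling $\mathcal S$ whose parameters satisfy $a\ge\lambda\ge2$ and $\lambda\ge1+\frac{a}{a-1}$. Let $x,y\in X$ and let $(z,m),(w,n)\in\mathcal S$ with $x\in B(z,a^{-m})$, $y\in B(w,a^{-n})$ and $a^{-m}+a^{-n}<a^{-2}d(x,y)$. Then every $u\in c(x,y)$ is a $K$-approximate center, with $K=80$, of every geodesic triangle $[v_0,(z,m),(w,n)]$ in $(\tilde{\mathcal S},D_1)$.
   Context: Hyperbolic filling: $X_0\subset X_1\subset\cdots$ increasing, each $X_n$ a maximal $a^{-n}$-separated subset of $X$; $X_0=\{x_0\}$. $\mathcal S_n=\{(x,n):x\in X_n\}$, $\mathcal S=\bigcup_n\mathcal S_n$, $v_0=(x_0,0)$. $D_1$ is the graph distance on $\mathcal S$ for the graph where distinct $(x,n),(y,m)$ are adjacent iff either $n=m$ and $B(x,\lambda a^{-n})\cap B(y,\lambda a^{-n})\ne\emptyset$, or $|n-m|=1$ and $B(x,a^{-n})\cap B(y,a^{-m})\ne\emptyset$. $(\tilde{\mathcal S},D_1)$ is the geodesic metric space obtained from this graph by replacing each edge with an isometric copy of $[0,1]$ (so $\mathcal S\subset\tilde{\mathcal S}$ and $D_1$ extends the graph distance). A geodesic triangle $[p,q,r]$ is a union of geodesic segments $[p,q]\cup[q,r]\cup[r,p]$; a point $c$ is a $K$-approximate center of it if its distance to each of the three sides is at most $K$. For distinct $x,y\in X$, let $\tilde n$ be the largest integer such that $\{x,y\}\subset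 B(\tilde z,2a^{-\tilde n})$ for some $(\tilde z,\tilde n)\in\mathcal S$, and $c(x,y)=\{(\tilde z,\tilde n)\in\mathcal S:\{x,y\}\subset B(\tilde z,2a^{-\tilde n})\}$. *)

From Stdlib Require Import Reals Lra List ClassicalEpsilon.
Open Scope R_scope.

Definition ball {X : Type} (d : X -> X -> R) (c : X) (r : R) (y : X) : Prop :=
  d c y < r.

Definition is_metric {X : Type} (d : X -> X -> R) : Prop :=
  (forall x y, 0 <= d x y) /\
  (forall x y, d x y = 0 <-> x = y) /\
  (forall x y, d x y = d y x) /\
  (forall x y z, d x z <= d x y + d y z).

Definition is_open {X : Type} (d : X -> X -> R) (U : X -> Prop) : Prop :=
  forall x, U x -> exists r, 0 < r /\ forall y, ball d x r y -> U y.

Definition compact_space {X : Type} (d : X -> X -> R) : Prop :=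
  forall (I : Type) (U : I -> X -> Prop),
    (forall i, is_open d (U i)) -> (forall x, exists i, U i x) ->
    exists l : list I, forall x, exists i, In i l /\ U i x.

Definition diam_eq {X : Type} (d : X -> X -> R) (D : R) : Prop :=
  is_lub (fun r => exists x y : X, r = d x y) D.

Definition separated {X : Type} (d : X -> X -> R) (A : X -> Prop) (r : R) : Prop :=
  forall x y, A x -> A y -> x <> y -> r <= d x y.

Definition maximal_separated {X : Type} (d : X -> X -> R) (A : X -> Prop) (r : R) : Prop :=
  separated d A r /\
  forall B : X -> Prop, separated d B r -> (forall x, A x -> B x) -> forall x, B x -> A x.

Definition hyperbolic_filling {X : Type} (d : X -> X -> R) (a : R) (x0 : X)
  (Xs : nat -> X -> Prop) : Prop :=
  (forall x, Xs 0%nat x <-> x = x0) /\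
  (forall n x, Xs n x -> Xs (S n) x) /\
  (forall n, maximal_separated d (Xs n) (/ a ^ n)).

(* membership in S = union of S_n = {(x,n) : x in X_n} *)
Definition inS {X : Type} (Xs : nat -> X -> Prop) (v : X * nat) : Prop :=
  Xs (snd v) (fst v).

Definition adj {X : Type} (d : X -> X -> R) (a lam : R) (Xs : nat -> X -> Prop)
  (v w : X * nat) : Prop :=
  inS Xs v /\ inS Xs w /\ v <> w /\
  ( (snd v = snd w /\
      exists p, ball d (fst v) (lam / a ^ snd v) p /\ ball d (fst w) (lam / a ^ snd v) p)
    \/
    ((snd v = S (snd w) \/ snd w = S (snd v)) /\
      exists p, ball d (fst v) (/ a ^ snd v) p /\ ball d (fst w) (/ a ^ snd w) p) ).

Inductive walk {V : Type} (E : V -> V -> Prop) : V -> V -> nat -> Prop :=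
| walk0 v : walk E v v 0
| walkS v u w k : E v u -> walk E u w k -> walk E v w (S k).

Definition graph_dist {V : Type} (E : V -> V -> Prop) (v w : V) : R :=
  INR (epsilon (inhabits 0%nat)
         (fun k => walk E v w k /\ forall j, walk E v w j -> (k <= j)%nat)).

(* points of the metric graph: vertices, or a point at parameter t in (0,1)
   on the edge from v to w (the same point has two representations,
   (v,w,t) and (w,v,1-t); the distance below identifies them) *)
Inductive fpoint (V : Type) : Type :=
| FVert (v : V)
| FEdge (v w : V) (t : R).
Arguments FVert {V} v.
Arguments FEdge {V} v w t.

Definition fpoint_wf {V : Type} (VS : V -> Prop) (E : V -> V -> Prop) (p : fpoint V) : Prop :=
  match p with
  | FVert v => VS v
  | FEdge v w t => E v w /\ 0 < t < 1
  end.

Definition dist_to_vertex {V : Type} (D : V -> V -> R) (p : fpoint V) (u : V) : R :=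
  match p with
  | FVert v => D v u
  | FEdge v w t => Rmin (t + D v u) ((1 - t) + D w u)
  end.

(* the geodesic (length) metric of the graph with unit-length edges *)
Definition fdist {V : Type} (D : V -> V -> R) (p q : fpoint V) : R :=
  match p with
  | FVert v => dist_to_vertex D q v
  | FEdge v w t =>
      match q with
      | FVert u => dist_to_vertex D p u
      | FEdge v' w' s =>
          let base := Rmin (t + dist_to_vertex D q v) ((1 - t) + dist_to_vertex D q w) in
          if excluded_middle_informative (v = v' /\ w = w') then Rmin base (Rabs (t - s))
          else if excluded_middle_informative (v = w' /\ w = v')
               then Rmin base (Rabs (t - (1 - s)))
               else base
      end
  end.

Definition is_geodesic {V : Type} (VS : V -> Prop) (E : V -> V -> Prop) (D : V -> V -> R)
  (p q : fpoint V) (gam : R -> fpoint V) : Prop :=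
  let L := fdist D p q in
  gam 0 = p /\ gam L = q /\
  (forall s, 0 <= s <= L -> fpoint_wf VS E (gam s)) /\
  (forall s t, 0 <= s <= L -> 0 <= t <= L -> fdist D (gam s) (gam t) = Rabs (s - t)).

Definition segment {V : Type} (D : V -> V -> R) (p q : fpoint V) (gam : R -> fpoint V)
  (r : fpoint V) : Prop :=
  exists s, 0 <= s <= fdist D p q /\ r = gam s.

Definition dist_set_le {V : Type} (D : V -> V -> R) (c : fpoint V) (A : fpoint V -> Prop)
  (K : R) : Prop :=
  forall eps, 0 < eps -> exists r, A r /\ fdist D c r < K + eps.

Definition approx_center {V : Type} (D : V -> V -> R) (K : R) (c p q r : fpoint V)
  (g1 g2 g3 : R -> fpoint V) : Prop :=
  dist_set_le D c (segment D p q g1) K /\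
  dist_set_le D c (segment D q r g2) K /\
  dist_set_le D c (segment D r p g3) K.

Definition D1 {X : Type} (d : X -> X -> R) (a lam : R) (Xs : nat -> X -> Prop) :
  X * nat -> X * nat -> R :=
  graph_dist (adj d a lam Xs).

Definition filling_geodesic {X : Type} (d : X -> X -> R) (a lam : R) (Xs : nat -> X -> Prop)
  (p q : fpoint (X * nat)) (gam : R -> fpoint (X * nat)) : Prop :=
  is_geodesic (inS Xs) (adj d a lam Xs) (D1 d a lam Xs) p q gam.

Definition in_c {X : Type} (d : X -> X -> R) (a : R) (Xs : nat -> X -> Prop)
  (x y : X) (u : X * nat) : Prop :=
  inS Xs u /\ ball d (fst u) (2 / a ^ snd u) x /\ ball d (fst u) (2 / a ^ snd u) y /\
  forall v, inS Xs v -> ball d (fst v) (2 / a ^ snd v) x -> ball d (fst v) (2 / a ^ snd v) y ->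
    (snd v <= snd u)%nat.

(* The vertex u = (p, k) of c(x, y) sits at the scale where x and y separate:
   a^-(k+1) < d(x, y) < 4 a^-k, so the hypothesis on m and n forces k < m, n.
   Two vertices whose ancestors at some level l both lie in a ball B(xi, lam a^-l)
   are at graph distance at most the sum of their level gaps plus one, because
   those ancestors coincide or are adjacent.  The vertices of a geodesic from the
   root v0 to (z, m) have levels 0, 1, ..., m, and the one at level k lies within
   4a a^-k of z, hence within distance 7 of u; the side [(w, n), v0] is the same
   kind of geodesic, reversed.  On the geodesic from (z, m) to (w, n) take a vertex
   (q, L) of lowest level: the subpaths joining it to (z, m) and (w, n) have
   displacement of order a^-L, and comparing their sum with d(x, y) > a^-(k+1)
   gives L <= k + 6, so (q, L) lies within distance 16 of u. *)

From Stdlib Require Import Reals Lra Lia Wf_nat.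
From Stdlib Require Import Classical ClassicalEpsilon FunctionalExtensionality PropExtensionality.
Open Scope R_scope.

Section Walks.
Context {V : Type}.
Variable E : V -> V -> Prop.

Lemma walk_app v u w k1 k2 : walk E v u k1 -> walk E u w k2 -> walk E v w (k1 + k2).
Proof. induction 1; intros; simpl; auto. econstructor; eauto. Qed.

Lemma walk_snoc v u w k : walk E v u k -> E u w -> walk E v w (S k).
Proof.
  intros Hvu Huw. rewrite <- Nat.add_1_r. apply (walk_app _ _ _ _ _ Hvu).
  econstructor; [exact Huw | constructor].
Qed.

Lemma walk_one v w : walk E v w 1 -> E v w.
Proof. inversion 1 as [|? u ? ? Hvu Hw]; subst. inversion Hw; subst. exact Hvu. Qed.

Lemma graph_dist_spec v w k : walk E v w k ->
  exists j, graph_dist E v w = INR j /\ walk E v w j /\ forall i, walk E v w i -> (j <= i)%nat.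
Proof.
  intro Hk. set (P := fun j => walk E v w j /\ forall i, walk E v w i -> (j <= i)%nat).
  assert (HP : exists j, P j).
  { destruct (dec_inh_nat_subset_has_unique_least_element (walk E v w)) as [j [Hj _]].
    - intro n. apply classic.
    - exists k. exact Hk.
    - exists j. exact Hj. }
  exists (epsilon (inhabits 0%nat) P). split; [reflexivity | exact (epsilon_spec _ P HP)].
Qed.

Lemma graph_dist_le v w k : walk E v w k -> graph_dist E v w <= INR k.
Proof.
  intro Hk. destruct (graph_dist_spec v w k Hk) as [j [-> [_ Hmin]]].
  apply le_INR, Hmin, Hk.
Qed.

Lemma graph_dist_nat v w : exists k, graph_dist E v w = INR k.
Proof. eexists. reflexivity. Qed.

Lemma graph_dist_walk v w k j : walk E v w j -> graph_dist E v w = INR k -> walk E v w k.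
Proof.
  intros Hj Hk. destruct (graph_dist_spec v w j Hj) as [i [Hi [Wi _]]].
  rewrite Hk in Hi. apply INR_eq in Hi. subst. exact Wi.
Qed.

Lemma graph_dist_triangle v u w k1 k2 : walk E v u k1 -> walk E u w k2 ->
  graph_dist E v w <= graph_dist E v u + graph_dist E u w.
Proof.
  intros H1 H2. destruct (graph_dist_spec v u k1 H1) as [j1 [-> [W1 _]]].
  destruct (graph_dist_spec u w k2 H2) as [j2 [-> [W2 _]]].
  rewrite <- plus_INR. apply graph_dist_le, (walk_app _ _ _ _ _ W1 W2).
Qed.

Hypothesis E_sym : forall v w, E v w -> E w v.

Lemma walk_rev v w k : walk E v w k -> walk E w v k.
Proof. induction 1; [constructor | eapply walk_snoc; eauto]. Qed.

Lemma graph_dist_sym v w : graph_dist E v w = graph_dist E w v.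
Proof.
  unfold graph_dist. do 2 f_equal.
  apply functional_extensionality; intro k. apply propositional_extensionality.
  split; intros [Hk Hmin]; split; auto using walk_rev.
Qed.

End Walks.

Lemma dist_set_le_vertex {V : Type} (D : V -> V -> R) u v p q gam s K :
  0 <= s <= fdist D p q -> gam s = FVert v -> D v u <= K ->
  dist_set_le D (FVert u) (segment D p q gam) K.
Proof.
  intros Hs Hv HK eps Heps. exists (gam s). split; [exists s; auto |].
  rewrite Hv. simpl. lra.
Qed.

Lemma dist_set_le_mono {V : Type} (D : V -> V -> R) c (A B : fpoint V -> Prop) K :
  (forall r, A r -> B r) -> dist_set_le D c A K -> dist_set_le D c B K.
Proof.
  intros HAB H eps Heps. destruct (H eps Heps) as [r [Hr Hd]]. exists r. auto.
Qed.

Lemma frac_plus_INR_neq (t : R) (i s : nat) : 0 < t < 1 -> t + INR i <> INR s.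
Proof.
  intros Ht Heq. destruct (Nat.le_gt_cases s i) as [Hsi | Hsi]; apply le_INR in Hsi.
  - lra.
  - rewrite S_INR in Hsi. lra.
Qed.

Lemma Rabs_INR_sub (s T : nat) : (s <= T)%nat -> Rabs (INR s - INR T) = INR (T - s).
Proof.
  intro Hs. rewrite Rabs_minus_sym, minus_INR by exact Hs.
  apply Rabs_pos_eq. rewrite <- minus_INR by exact Hs. apply pos_INR.
Qed.

Section MetricGraph.
Context {V : Type}.
Variable VS : V -> Prop.
Variable E : V -> V -> Prop.
Hypothesis E_sym : forall v w, E v w -> E w v.
Hypothesis E_connected : forall v w, VS v -> VS w -> exists k, walk E v w k.
Local Notation D := (graph_dist E).

(* Graph distances are natural numbers, so a point at integral distance from a
   vertex cannot lie inside an edge. *)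
Lemma vertex_of_nat_dist v p s :
  fpoint_wf VS E p -> dist_to_vertex D p v = INR s -> exists u, p = FVert u.
Proof.
  destruct p as [u | v1 w1 t]; [eauto |]. intros [_ Ht] Hs. exfalso. simpl in Hs.
  destruct (graph_dist_nat E v1 v) as [i Hi]. destruct (graph_dist_nat E w1 v) as [j Hj].
  rewrite Hi, Hj in Hs. unfold Rmin in Hs. destruct (Rle_dec _ _).
  - exact (frac_plus_INR_neq t i s Ht Hs).
  - exact (frac_plus_INR_neq (1 - t) j s ltac:(lra) Hs).
Qed.

Lemma geodesic_vertices v w gam T :
  is_geodesic VS E D (FVert v) (FVert w) gam -> D w v = INR T ->
  exists q : nat -> V, q 0%nat = v /\ q T = w /\
    (forall s, (s <= T)%nat -> gam (INR s) = FVert (q s) /\ VS (q s) /\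
       D (q s) v = INR s /\ D w (q s) = INR (T - s)) /\
    (forall s, (s < T)%nat -> E (q s) (q (S s))).
Proof.
  intros [Hstart [Hend [Hwf Hd]]] HT. simpl in Hend, Hwf, Hd. rewrite HT in Hend, Hwf, Hd.
  assert (Hrange : forall s, (s <= T)%nat -> 0 <= INR s <= INR T)
    by (intros s Hs; split; [apply pos_INR | apply le_INR, Hs]).
  set (q := fun s => match gam (INR s) with FVert u => u | FEdge _ _ _ => v end).
  assert (Hq : forall s, (s <= T)%nat -> gam (INR s) = FVert (q s) /\ VS (q s) /\
             D (q s) v = INR s /\ D w (q s) = INR (T - s)).
  { intros s Hs. pose proof (Hd 0 (INR s) ltac:(split; [lra | apply pos_INR]) (Hrange s Hs)) as Hs0.
    pose proof (Hd (INR s) (INR T) (Hrange s Hs) (Hrange T (le_n T))) as HsT.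
    rewrite Hstart, Rminus_0_l, Rabs_Ropp, Rabs_pos_eq in Hs0 by apply pos_INR.
    rewrite Hend, Rabs_INR_sub in HsT by exact Hs.
    pose proof (Hwf _ (Hrange s Hs)) as Hws.
    destruct (vertex_of_nat_dist v _ s Hws Hs0) as [u Hu].
    unfold q. rewrite Hu in Hs0, HsT, Hws |- *. simpl in Hs0, HsT, Hws. auto. }
  exists q. split; [| split; [| split; [exact Hq |]]].
  - unfold q. simpl. rewrite Hstart. reflexivity.
  - unfold q. rewrite Hend. reflexivity.
  - intros s Hs. destruct (Hq s ltac:(lia)) as [Es [Vs _]].
    destruct (Hq (S s) ltac:(lia)) as [ES [VS' _]].
    pose proof (Hd (INR s) (INR (S s)) (Hrange s ltac:(lia)) (Hrange (S s) Hs)) as Hunit.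
    rewrite Es, ES, Rabs_INR_sub, Nat.sub_succ_l, Nat.sub_diag in Hunit by lia.
    destruct (E_connected _ _ VS' Vs) as [k Hk].
    apply E_sym, walk_one, (graph_dist_walk E _ _ 1 k Hk). exact Hunit.
Qed.

Lemma geodesic_rev v w gam : is_geodesic VS E D (FVert v) (FVert w) gam ->
  is_geodesic VS E D (FVert w) (FVert v) (fun s => gam (D w v - s)).
Proof.
  intros [Hstart [Hend [Hwf Hd]]]. unfold is_geodesic. simpl in *.
  rewrite (graph_dist_sym E E_sym w v) in *. repeat split.
  - rewrite Rminus_0_r. exact Hend.
  - rewrite Rminus_diag. exact Hstart.
  - intros s Hs. apply Hwf. lra.
  - intros s t Hs Ht. rewrite Hd by lra.
    replace (D v w - s - (D v w - t)) with (t - s) by ring. apply Rabs_minus_sym.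
Qed.

Lemma segment_rev v w gam r :
  segment D (FVert w) (FVert v) (fun s => gam (D w v - s)) r -> segment D (FVert v) (FVert w) gam r.
Proof.
  intros [s [Hs ->]]. simpl in *. rewrite (graph_dist_sym E E_sym v w) in Hs.
  exists (D w v - s). simpl. split; [lra | reflexivity].
Qed.

End MetricGraph.

Lemma nat_argmin (f : nat -> nat) N :
  exists i, (i <= N)%nat /\ forall j, (j <= N)%nat -> (f i <= f j)%nat.
Proof.
  induction N as [| N [i [Hi Hmin]]].
  - exists 0%nat. split; [lia |]. intros j Hj. replace j with 0%nat by lia. lia.
  - destruct (Nat.le_gt_cases (f i) (f (S N))).
    + exists i. split; [lia |]. intros j Hj.
      destruct (Nat.eq_dec j (S N)) as [-> |]; [lia | apply Hmin; lia].
    + exists (S N). split; [lia |]. intros j Hj.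
      destruct (Nat.eq_dec j (S N)) as [-> |]; [lia |]. specialize (Hmin j ltac:(lia)). lia.
Qed.

Section Filling.
Variable X : Type.
Variable d : X -> X -> R.
Variables a lam : R.
Variable x0 : X.
Variable Xs : nat -> X -> Prop.
Hypothesis Hmet : is_metric d.
Hypothesis Hl2 : 2 <= lam.
Hypothesis Hal : lam <= a.
Hypothesis Hla : 1 + a / (a - 1) <= lam.
Hypothesis Hfill : hyperbolic_filling d a x0 Xs.

Local Notation E := (adj d a lam Xs).
Local Notation D := (D1 d a lam Xs).
Local Notation v0 := (x0, 0%nat).

Lemma d_sym p q : d p q = d q p. Proof. apply Hmet. Qed.
Lemma d_triangle p q r : d p r <= d p q + d q r. Proof. apply Hmet. Qed.
Lemma d_refl p : d p p = 0. Proof. apply Hmet. reflexivity. Qed.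

Lemma a_ge_13_5 : 13 / 5 <= a.
Proof.
  assert (Hdiv : a / (a - 1) * (a - 1) = a) by (field; lra).
  assert (a <= (a - 1) * (a - 1)) by (rewrite <- Hdiv at 1; apply Rmult_le_compat_r; lra).
  nra.
Qed.

Lemma a_div_bounds : 0 <= a / (a - 1) <= 2.
Proof.
  split; [apply Rlt_le, Rdiv_lt_0_compat; lra |].
  apply Rmult_le_reg_r with (a - 1); [lra |]. field_simplify; lra.
Qed.

Definition scale (k : nat) : R := / a ^ k.

Lemma scale_pos k : 0 < scale k.
Proof. apply Rinv_0_lt_compat, pow_lt. lra. Qed.

Lemma scale_S k : scale (S k) = scale k / a.
Proof. unfold scale. simpl. rewrite Rinv_mult. unfold Rdiv. ring. Qed.

Lemma scale_add k j : scale (k + j) = scale k * scale j.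
Proof. unfold scale. rewrite pow_add, Rinv_mult. reflexivity. Qed.

Lemma scale_sub j k : (j <= k)%nat -> scale (k - j) = a ^ j * scale k.
Proof.
  intro Hjk. unfold scale. replace k with (k - j + j)%nat at 2 by lia.
  rewrite pow_add. field. split; apply pow_nonzero; lra.
Qed.

Lemma scale_le k k' : (k <= k')%nat -> scale k' <= scale k.
Proof.
  intro H. apply Rinv_le_contravar; [apply pow_lt; lra |]. apply Rle_pow; [lra | exact H].
Qed.

Lemma four_scale_2_lt_1 : 4 * scale 2 < 1.
Proof.
  pose proof a_ge_13_5. unfold scale. simpl. rewrite Rmult_1_r.
  apply Rmult_lt_reg_r with (a * a); [nra |]. rewrite Rmult_assoc, Rinv_l; nra.
Qed.

Lemma lin_lt_pow_3 : 4 * a + 1 < a ^ 3.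
Proof. pose proof a_ge_13_5. assert (5 <= a * a) by nra. simpl. nra. Qed.

Lemma lin_lt_pow_7 : 32 * a + 1 < a ^ 7.
Proof.
  pose proof a_ge_13_5.
  assert (Ha6 : (13 / 5) ^ 6 <= a ^ 6) by (apply pow_incr; lra).
  replace (a ^ 7) with (a * a ^ 6) by reflexivity. simpl in Ha6. nra.
Qed.

Lemma lin_le_pow i : 4 * INR i + 40 <= a ^ (i + 3) * (a * a - 1).
Proof.
  pose proof a_ge_13_5. induction i as [| i IH].
  - assert (6 <= a * a) by nra. assert (15 <= a * (a * a)) by nra. simpl. nra.
  - rewrite S_INR. replace (S i + 3)%nat with (S (i + 3)) by lia. simpl pow.
    pose proof (pos_INR i). nra.
Qed.

Lemma net_point n p : exists q, Xs n q /\ d q p < scale n.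
Proof.
  apply NNPP. intro Hno. destruct Hfill as [_ [_ Hmax]]. destruct (Hmax n) as [Hsep Hsat].
  assert (Hext : separated d (fun q => Xs n q \/ q = p) (/ a ^ n)).
  { intros q q' [Hq | ->] [Hq' | ->] Hne.
    - apply Hsep; auto.
    - apply Rnot_lt_le. intro Hlt. apply Hno. eauto.
    - apply Rnot_lt_le. intro Hlt. apply Hno. exists q'. rewrite d_sym. auto.
    - congruence. }
  apply Hno. exists p. split.
  - apply (Hsat _ Hext); auto.
  - rewrite d_refl. apply scale_pos.
Qed.

Lemma root_unique p : Xs 0 p -> p = x0.
Proof. apply Hfill. Qed.

Lemma adj_sym v w : E v w -> E w v.
Proof.
  intros [Hv [Hw [Hne Hball]]]. repeat split; auto.
  destruct Hball as [[Hs [p [Hp1 Hp2]]] | [Hs [p [Hp1 Hp2]]]].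
  - left. split; [auto |]. exists p. rewrite <- Hs. auto.
  - right. split; [lia |]. exists p. auto.
Qed.

Lemma adj_level v w : E v w -> (snd w <= S (snd v) /\ snd v <= S (snd w))%nat.
Proof. intros [_ [_ [_ [[Hs _] | [Hs _]]]]]; lia. Qed.

Lemma walk_level v w k : walk E v w k -> (snd w <= snd v + k /\ snd v <= snd w + k)%nat.
Proof. induction 1 as [| v u w k Hvu _ IH]; [lia |]. apply adj_level in Hvu. lia. Qed.

Lemma adj_displacement v w : E v w -> d (fst v) (fst w) <= 2 * a * scale (Nat.min (snd v) (snd w)).
Proof.
  destruct v as [p k], w as [q l]. simpl.
  intros [_ [_ [_ [[Hs [t [Hpt Hqt]]] | [Hs [t [Hpt Hqt]]]]]]]; unfold ball, Rdiv in *; simpl in *;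
    pose proof (d_triangle p t q); rewrite (d_sym t q) in *.
  - subst l. rewrite Nat.min_id. fold (scale k) in Hpt, Hqt.
    pose proof (scale_pos k).
    assert (lam * scale k <= a * scale k) by (apply Rmult_le_compat_r; lra).
    lra.
  - fold (scale k) in Hpt. fold (scale l) in Hqt.
    assert (Hmin : scale k <= scale (Nat.min k l) /\ scale l <= scale (Nat.min k l))
      by (split; apply scale_le; lia).
    pose proof (scale_pos (Nat.min k l)) as Hpos.
    assert (scale (Nat.min k l) <= a * scale (Nat.min k l)) by (pose proof a_ge_13_5; nra).
    lra.
Qed.

Lemma ancestor_exists k l p : (l <= k)%nat -> Xs k p ->
  exists q, Xs l q /\ walk E (p, k) (q, l) (k - l) /\ d q p <= a / (a - 1) * (scale l - scale k).
Proof.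
  revert p. induction k as [| k IH]; intros p Hlk Hp.
  - replace l with 0%nat by lia. exists p. rewrite d_refl. repeat split; auto; [constructor | lra].
  - destruct (Nat.eq_dec l (S k)) as [-> | Hne].
    + exists p. rewrite d_refl, Nat.sub_diag. repeat split; auto; [constructor | lra].
    + destruct (net_point k p) as [q' [Hq' Hq'p]].
      destruct (IH q' ltac:(lia) Hq') as [q [Hq [Wq Hqq']]].
      exists q. split; [exact Hq | split].
      * replace (S k - l)%nat with (S (k - l)) by lia. apply (walkS _ _ (q', k)); [| exact Wq].
        repeat split; auto; [intro Heq; inversion Heq; lia |].
        right. split; [left; reflexivity |]. exists p. unfold ball. simpl.
        rewrite d_refl. split; [apply (scale_pos (S k)) | exact Hq'p].
      * pose proof (d_triangle q q' p). rewrite scale_S.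
        assert (a / (a - 1) * (scale l - scale k) + scale k = a / (a - 1) * (scale l - scale k / a))
          by (field; lra).
        lra.
Qed.

Lemma walk_to_root v : inS Xs v -> walk E v v0 (snd v).
Proof.
  destruct v as [p k]. unfold inS. simpl. intro Hp.
  destruct (ancestor_exists k 0 p ltac:(lia) Hp) as [q [Hq [Wq _]]].
  rewrite (root_unique q Hq), Nat.sub_0_r in Wq. exact Wq.
Qed.

Lemma filling_connected v w : inS Xs v -> inS Xs w -> exists k, walk E v w k.
Proof.
  intros Hv Hw. exists (snd v + snd w)%nat.
  apply (walk_app _ _ _ _ _ _ (walk_to_root v Hv)), (walk_rev _ adj_sym), walk_to_root, Hw.
Qed.

Lemma D1_level v w k : inS Xs v -> inS Xs w -> D v w = INR k ->
  (snd w <= snd v + k /\ snd v <= snd w + k)%nat.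
Proof.
  intros Hv Hw Hk. destruct (filling_connected v w Hv Hw) as [j Hj].
  apply walk_level, (graph_dist_walk _ _ _ _ _ Hj Hk).
Qed.

Lemma D1_root p k : Xs k p -> D (p, k) v0 = INR k.
Proof.
  intro Hp. pose proof (walk_to_root (p, k) Hp) as Wk.
  destruct (graph_dist_spec _ _ _ _ Wk) as [j [Hj [Wj Hmin]]].
  unfold D1. rewrite Hj. f_equal. apply walk_level in Wj. specialize (Hmin k Wk). simpl in *. lia.
Qed.

Lemma D1_triangle v u w : inS Xs v -> inS Xs u -> inS Xs w -> D v w <= D v u + D u w.
Proof.
  intros Hv Hu Hw. destruct (filling_connected v u Hv Hu) as [k1 H1].
  destruct (filling_connected u w Hu Hw) as [k2 H2].
  exact (graph_dist_triangle _ _ _ _ _ _ H1 H2).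
Qed.

Lemma D1_le_levels p k p' k' : Xs k p -> Xs k' p' -> D (p, k) (p', k') <= INR (k + k').
Proof.
  intros Hp Hp'. apply graph_dist_le.
  apply (walk_app _ _ _ _ _ _ (walk_to_root (p, k) Hp)), (walk_rev _ adj_sym).
  exact (walk_to_root (p', k') Hp').
Qed.

(* If [d p xi <= r] for a vertex [(p, k)], then [near_at l k r] puts the level-[l]
   ancestor of [(p, k)] given by [ancestor_exists] in [B(xi, lam a^-l)]. *)
Definition near_at (l k : nat) (r : R) : Prop :=
  r + a / (a - 1) * (scale l - scale k) < lam * scale l.

Lemma near_at_of_lt l k r : (l <= k)%nat -> r < scale l -> near_at l k r.
Proof.
  intros Hlk Hr. unfold near_at. pose proof (scale_le _ _ Hlk). pose proof (scale_pos k).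
  pose proof a_div_bounds.
  pose proof (scale_pos l).
  assert (a / (a - 1) * (scale l - scale k) <= a / (a - 1) * scale l)
    by (apply Rmult_le_compat_l; lra).
  assert ((1 + a / (a - 1)) * scale l <= lam * scale l) by (apply Rmult_le_compat_r; lra).
  lra.
Qed.

Lemma near_at_self k r : r < 2 * scale k -> near_at k k r.
Proof.
  intro Hr. unfold near_at. rewrite Rminus_diag, Rmult_0_r, Rplus_0_r.
  pose proof (scale_pos k). nra.
Qed.

Lemma D1_le_via_level l xi p k p' k' : Xs k p -> Xs k' p' -> (l <= k)%nat -> (l <= k')%nat ->
  near_at l k (d p xi) -> near_at l k' (d p' xi) -> D (p, k) (p', k') <= INR (k - l + (k' - l) + 1).
Proof.
  intros Hp Hp' Hlk Hlk' Hn Hn'. unfold near_at in Hn, Hn'.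
  destruct (ancestor_exists k l p Hlk Hp) as [q [Hq [Wq Hqp]]].
  destruct (ancestor_exists k' l p' Hlk' Hp') as [q' [Hq' [Wq' Hq'p']]].
  assert (Hwalk : exists j, (j <= k - l + (k' - l) + 1)%nat /\ walk E (p, k) (p', k') j).
  { destruct (classic (q = q')) as [<- | Hne].
    - exists (k - l + (k' - l))%nat. split; [lia |].
      exact (walk_app _ _ _ _ _ _ Wq (walk_rev _ adj_sym _ _ _ Wq')).
    - exists (k - l + S (k' - l))%nat. split; [lia |].
      apply (walk_app _ _ _ _ _ _ Wq), (walkS _ _ (q', l));
        [| exact (walk_rev _ adj_sym _ _ _ Wq')].
      repeat split; auto; [intro Heq; inversion Heq; auto |].
      left. split; [reflexivity |]. exists xi. unfold ball, Rdiv. simpl. fold (scale l).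
      pose proof (d_triangle q p xi). pose proof (d_triangle q' p' xi). split; lra. }
  destruct Hwalk as [j [Hj Wj]].
  apply (Rle_trans _ (INR j)); [apply graph_dist_le, Wj | apply le_INR, Hj].
Qed.

Lemma D1_le_near j xi p k p' k' : Xs k p -> Xs k' p' -> (k <= k' + j)%nat ->
  d p xi < a ^ j * scale k -> d p' xi < a ^ j * scale k ->
  D (p, k) (p', k') + INR k <= INR (2 * j + k' + 1).
Proof.
  intros Hp Hp' Hkk' Hd Hd'. destruct (Nat.le_gt_cases j k) as [Hjk | Hjk].
  - rewrite <- (scale_sub j k Hjk) in Hd, Hd'.
    pose proof (D1_le_via_level (k - j) xi p k p' k' Hp Hp' ltac:(lia) ltac:(lia)
                  (near_at_of_lt (k - j) k _ ltac:(lia) Hd)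
                  (near_at_of_lt (k - j) k' _ ltac:(lia) Hd')).
    assert (INR (k - (k - j) + (k' - (k - j)) + 1) + INR k = INR (2 * j + k' + 1))
      by (rewrite <- plus_INR; f_equal; lia).
    lra.
  - pose proof (D1_le_levels p k p' k' Hp Hp').
    assert (INR (k + k') + INR k <= INR (2 * j + k' + 1))
      by (rewrite <- plus_INR; apply le_INR; lia).
    lra.
Qed.

(* While the bound [M - i] dominates, the steps shrink by the factor [1/a] and
   sum to a geometric series; at level [L] each step costs at most [2 a a^-L]. *)
Lemma path_displacement (r : nat -> X * nat) N M L :
  (forall i, (i <= N)%nat -> (M - i <= snd (r i))%nat /\ (L <= snd (r i))%nat) ->
  (forall i, (i < N)%nat -> E (r i) (r (S i))) ->
  forall i, (i <= N)%nat -> d (fst (r 0%nat)) (fst (r i)) <=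
    2 * a * (a / (a - 1) * scale (Nat.max (M - i) L) + scale L * INR (i + L - M)).
Proof.
  intros Hlev Hadj i. pose proof a_div_bounds. induction i as [| i IH]; intro Hi.
  - rewrite d_refl. pose proof (scale_pos (Nat.max (M - 0) L)). pose proof (scale_pos L).
    pose proof (pos_INR (0 + L - M)). apply Rmult_le_pos; [lra |].
    apply Rplus_le_le_0_compat; apply Rmult_le_pos; lra.
  - specialize (IH ltac:(lia)). pose proof (adj_displacement _ _ (Hadj i ltac:(lia))) as Hstep.
    destruct (Hlev i ltac:(lia)), (Hlev (S i) ltac:(lia)).
    pose proof (d_triangle (fst (r 0%nat)) (fst (r i)) (fst (r (S i)))).
    destruct (Nat.le_gt_cases (S i) (M - L)) as [Hhigh | Hlow].
    + replace (Nat.max (M - i) L) with (S (M - S i)) in IH by lia.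
      replace (Nat.max (M - S i) L) with (M - S i)%nat by lia.
      replace (i + L - M)%nat with 0%nat in IH by lia. replace (S i + L - M)%nat with 0%nat by lia.
      rewrite scale_S in IH. simpl INR in *.
      assert (scale (Nat.min (snd (r i)) (snd (r (S i)))) <= scale (M - S i))
        by (apply scale_le; lia).
      assert (2 * a * (a / (a - 1) * (scale (M - S i) / a) + scale L * 0) + 2 * a * scale (M - S i)
              = 2 * a * (a / (a - 1) * scale (M - S i) + scale L * 0)) by (field; lra).
      pose proof a_ge_13_5. nra.
    + replace (Nat.max (M - i) L) with L in IH by lia. replace (Nat.max (M - S i) L) with L by lia.
      replace (S i + L - M)%nat with (S (i + L - M)) by lia. rewrite S_INR.
      assert (scale (Nat.min (snd (r i)) (snd (r (S i)))) <= scale L) by (apply scale_le; lia).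
      pose proof a_ge_13_5. nra.
Qed.

Lemma path_displacement_le (r : nat -> X * nat) N M L :
  (forall i, (i <= N)%nat -> (M - i <= snd (r i))%nat /\ (L <= snd (r i))%nat) ->
  (forall i, (i < N)%nat -> E (r i) (r (S i))) -> (M <= N + L)%nat ->
  d (fst (r 0%nat)) (fst (r N)) <= 2 * a * scale L * (2 + INR (N + L - M)).
Proof.
  intros Hlev Hadj HN. pose proof (path_displacement r N M L Hlev Hadj N (le_n N)) as H.
  replace (Nat.max (M - N) L) with L in H by lia.
  replace (2 * a * (a / (a - 1) * scale L + scale L * INR (N + L - M)))
    with (2 * a * scale L * (a / (a - 1) + INR (N + L - M))) in H by ring.
  pose proof a_div_bounds. pose proof (scale_pos L). pose proof a_ge_13_5.
  apply (Rle_trans _ _ _ H), Rmult_le_compat_l; [nra | lra].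
Qed.

Lemma filling_geodesic_path v w gam T :
  filling_geodesic d a lam Xs (FVert v) (FVert w) gam -> D w v = INR T ->
  exists q : nat -> X * nat, q 0%nat = v /\ q T = w /\
    (forall s, (s <= T)%nat -> gam (INR s) = FVert (q s) /\ inS Xs (q s) /\
       (snd v <= snd (q s) + s)%nat /\ (snd (q s) <= snd v + s)%nat /\
       (snd w <= snd (q s) + (T - s))%nat /\ (snd (q s) <= snd w + (T - s))%nat) /\
    (forall s, (s < T)%nat -> E (q s) (q (S s))).
Proof.
  intros Hgam HT.
  destruct (geodesic_vertices (inS Xs) E adj_sym filling_connected v w gam T Hgam HT)
    as [q [Hq0 [HqT [Hq Hadj]]]].
  exists q. split; [exact Hq0 | split; [exact HqT | split; [| exact Hadj]]].
  assert (Hv : inS Xs v) by (rewrite <- Hq0; apply (Hq 0%nat (Nat.le_0_l T))).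
  assert (Hw : inS Xs w) by (rewrite <- HqT; apply (Hq T (le_n T))).
  intros s Hs. destruct (Hq s Hs) as [Hgs [Hin [Hsv Hws]]].
  apply (D1_level _ _ _ Hin Hv) in Hsv. apply (D1_level _ _ _ Hw Hin) in Hws.
  repeat split; auto; lia.
Qed.

(* The endpoint lies within [4 a a^-k] of the start, so both it and [p] are in
   [B(xi, a^3 a^-k)]. *)
Lemma descending_path_near (r : nat -> X * nat) N M xi p k :
  (forall i, (i <= N)%nat -> inS Xs (r i) /\ snd (r i) = (M - i)%nat) ->
  (forall i, (i < N)%nat -> E (r i) (r (S i))) ->
  d (fst (r 0%nat)) xi < scale M -> Xs k p -> d p xi < 2 * scale k -> (k + N = M)%nat ->
  D (r N) (p, k) <= 7.
Proof.
  intros Hr Hadj Hr0 Hp Hpxi HN.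
  pose proof (path_displacement_le r N M k
                ltac:(intros i Hi; destruct (Hr i Hi) as [_ ->]; lia) Hadj ltac:(lia)) as Hdisp.
  replace (N + k - M)%nat with 0%nat in Hdisp by lia.
  destruct (Hr N (le_n N)) as [HinN HlevN]. destruct (r N) as [q l]. simpl in HinN, HlevN, Hdisp.
  replace l with k in * by lia.
  pose proof (scale_pos k). pose proof (scale_le k M ltac:(lia)). pose proof lin_lt_pow_3.
  pose proof (d_triangle q (fst (r 0%nat)) xi). rewrite d_sym in Hdisp.
  pose proof (D1_le_near 3 xi q k p k HinN Hp ltac:(lia) ltac:(simpl INR in *; nra) ltac:(nra))
    as Hnear.
  rewrite 2!plus_INR in Hnear. simpl INR in Hnear. lra.
Qed.

Lemma root_side_near z m x p k g :
  filling_geodesic d a lam Xs (FVert v0) (FVert (z, m)) g -> inS Xs (z, m) -> d z x < scale m ->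
  Xs k p -> d p x < 2 * scale k -> (k <= m)%nat ->
  dist_set_le D (FVert (p, k)) (segment D (FVert v0) (FVert (z, m)) g) 80.
Proof.
  intros Hg Hzm Hzx Hp Hpx Hkm.
  destruct (filling_geodesic_path _ _ _ m Hg (D1_root z m Hzm)) as [q [Hq0 [Hqm [Hq Hadj]]]].
  assert (Hlev : forall s, (s <= m)%nat -> inS Xs (q s) /\ snd (q s) = s).
  { intros s Hs. destruct (Hq s Hs) as [_ [Hin Hlev]]. simpl in Hlev. split; [exact Hin | lia]. }
  destruct (Hq k Hkm) as [Hgk _].
  assert (Hk : 0 <= INR k <= fdist D (FVert v0) (FVert (z, m))).
  { change (fdist D (FVert v0) (FVert (z, m))) with (D (z, m) v0). rewrite D1_root by exact Hzm.
    split; [apply pos_INR | apply le_INR, Hkm]. }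
  apply (dist_set_le_vertex _ _ (q k) _ _ _ _ _ Hk Hgk).
  apply (Rle_trans _ 7); [| lra]. replace k with (m - (m - k))%nat at 1 by lia.
  apply (descending_path_near (fun i => q (m - i)%nat) (m - k) m x p k); auto; [| | | lia].
  - intros i Hi. destruct (Hlev (m - i)%nat ltac:(lia)) as [Hin ->]. auto.
  - intros i Hi. apply adj_sym. replace (m - i)%nat with (S (m - S i)) by lia. apply Hadj. lia.
  - rewrite Nat.sub_0_r, Hqm. exact Hzx.
Qed.

Lemma lowest_vertex z m w n g T :
  filling_geodesic d a lam Xs (FVert (z, m)) (FVert (w, n)) g -> D (w, n) (z, m) = INR T ->
  exists s p L, 0 <= s <= INR T /\ g s = FVert (p, L) /\ Xs L p /\
    (L <= m)%nat /\ (m + n <= T + 2 * L)%nat /\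
    d z p <= 2 * a * scale L * (2 + INR (T + 2 * L - m - n)) /\
    d z p + d p w <= 2 * a * scale L * (4 + INR (T + 2 * L - m - n)).
Proof.
  intros Hg HT.
  destruct (filling_geodesic_path _ _ _ T Hg HT) as [q [Hq0 [HqT [Hq Hadj]]]].
  destruct (nat_argmin (fun s => snd (q s)) T) as [st [Hst Hmin]].
  assert (Hlev : forall i, (i <= T)%nat ->
            (m <= snd (q i) + i)%nat /\ (n <= snd (q i) + (T - i))%nat /\
            (snd (q st) <= snd (q i))%nat).
  { intros i Hi. destruct (Hq i Hi) as [_ [_ [Hm [_ [Hn _]]]]]. auto. }
  pose proof (path_displacement_le q st m (snd (q st))
                ltac:(intros i Hi; specialize (Hlev i ltac:(lia)); lia)
                ltac:(intros i Hi; apply Hadj; lia)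
                ltac:(specialize (Hlev st Hst); lia)) as Hpre.
  pose proof (path_displacement_le (fun i => q (T - i)%nat) (T - st) n (snd (q st))
                ltac:(intros i Hi; specialize (Hlev (T - i)%nat ltac:(lia)); lia)
                ltac:(intros i Hi; apply adj_sym; replace (T - i)%nat with (S (T - S i)) by lia;
                      apply Hadj; lia)
                ltac:(specialize (Hlev st Hst); lia)) as Hsuf.
  simpl in Hpre, Hsuf. rewrite Nat.sub_0_r, HqT in Hsuf.
  replace (T - (T - st))%nat with st in Hsuf by lia. rewrite Hq0 in Hpre.
  destruct (Hq st Hst) as [Hgst [Hin _]].
  assert (HLm : (snd (q st) <= m)%nat)
    by (specialize (Hmin 0%nat (Nat.le_0_l T)); rewrite Hq0 in Hmin; exact Hmin).
  specialize (Hlev st Hst).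
  destruct (q st) as [p L]. cbn [fst snd] in *.
  exists (INR st), p, L. split; [split; [apply pos_INR | apply le_INR, Hst] |].
  do 4 (split; [auto; lia |]).
  all: assert (Hc : INR (T + 2 * L - m - n) = INR (st + L - m) + INR (T - st + L - n))
         by (rewrite <- plus_INR; f_equal; lia).
  all: rewrite Hc; rewrite d_sym in Hsuf.
  all: assert (HK : 0 <= 2 * a * scale L) by (pose proof (scale_pos L); pose proof a_ge_13_5; nra).
  all: pose proof (Rmult_le_pos _ _ HK (pos_INR (T - st + L - n))); nra.
Qed.

Lemma lowest_level_bound k L :
  scale (S k) * (1 - scale 2) < 2 * a * scale L * (2 * INR (L - k) + 6) -> (L <= k + 6)%nat.
Proof.
  intro Hlt. destruct (Nat.le_gt_cases L (k + 6)) as [| HL]; [assumption | exfalso].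
  apply (Rlt_not_le _ _ Hlt).
  set (i := (L - k - 7)%nat).
  assert (HLi : scale L = scale (S k) * (scale 3 * scale (i + 3)))
    by (rewrite <- !scale_add; f_equal; unfold i; lia).
  assert (HLk : INR (L - k) = INR i + 7)
    by (replace (L - k)%nat with (i + 7)%nat by (unfold i; lia); rewrite plus_INR; simpl; ring).
  assert (Hscale2 : 1 - scale 2 = a * scale 3 * (a * a - 1)) by (unfold scale; simpl; field; lra).
  assert (Hpow : (4 * INR i + 40) * scale (i + 3) <= a * a - 1).
  { pose proof (lin_le_pow i). pose proof (pow_lt a (i + 3) ltac:(lra)).
    unfold scale. apply Rmult_le_reg_r with (a ^ (i + 3)); [lra |].
    rewrite Rmult_assoc, Rinv_l by lra. lra. }
  rewrite HLi, HLk, Hscale2.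
  pose proof (scale_pos (S k)). pose proof (scale_pos 3). pose proof a_ge_13_5.
  replace (2 * a * (scale (S k) * (scale 3 * scale (i + 3))) * (2 * (INR i + 7) + 6))
    with (scale (S k) * (a * scale 3) * ((4 * INR i + 40) * scale (i + 3))) by ring.
  replace (scale (S k) * (a * scale 3 * (a * a - 1)))
    with (scale (S k) * (a * scale 3) * (a * a - 1)) by ring.
  apply Rmult_le_compat_l; [| exact Hpow]. repeat apply Rmult_le_pos; lra.
Qed.

Lemma D1_le_through_center x y z m w n p k :
  inS Xs (z, m) -> inS Xs (w, n) -> d z x < scale m -> d w y < scale n ->
  Xs k p -> d p x < 2 * scale k -> d p y < 2 * scale k -> (k <= m)%nat -> (k <= n)%nat ->
  D (w, n) (z, m) <= INR (n - k + 1 + (m - k + 1)).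
Proof.
  intros Hzm Hwn Hzx Hwy Hp Hpx Hpy Hkm Hkn.
  pose proof (scale_le k m Hkm). pose proof (scale_le k n Hkn).
  pose proof (D1_triangle (w, n) (p, k) (z, m) Hwn Hp Hzm).
  pose proof (D1_le_via_level k y w n p k Hwn Hp Hkn (le_n k)
                (near_at_of_lt k n (d w y) Hkn ltac:(lra)) (near_at_self k _ Hpy)) as Hwp.
  pose proof (D1_le_via_level k x p k z m Hp Hzm (le_n k) Hkm
                (near_at_self k _ Hpx) (near_at_of_lt k m (d z x) Hkm ltac:(lra))) as Hpz.
  rewrite Nat.sub_diag, Nat.add_0_r in Hwp. rewrite Nat.sub_diag, Nat.add_0_l in Hpz.
  rewrite plus_INR. lra.
Qed.

Lemma low_vertex_near x z m q L p k c :
  Xs L q -> Xs k p -> (L <= m)%nat -> (k <= L + 1)%nat -> (L <= k + 6)%nat ->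
  d z x < scale m -> d p x < 2 * scale k -> 0 <= c <= 2 * INR (L - k) + 2 ->
  d z q <= 2 * a * scale L * (2 + c) -> D (q, L) (p, k) <= 16.
Proof.
  intros Hq Hp HLm HkL HL6 Hzx Hpx Hc Hzq.
  pose proof (scale_pos L). pose proof (scale_pos k). pose proof a_ge_13_5.
  assert (Hqx : d q x < a ^ 7 * scale L).
  { assert (INR (L - k) <= 6) by (replace 6 with (INR 6) by (simpl; ring); apply le_INR; lia).
    assert (2 * a * scale L * (2 + c) <= 2 * a * scale L * 16) by (apply Rmult_le_compat_l; nra).
    assert ((32 * a + 1) * scale L < a ^ 7 * scale L)
      by (apply Rmult_lt_compat_r; [lra | apply lin_lt_pow_7]).
    pose proof (d_triangle q z x). rewrite d_sym in Hzq. pose proof (scale_le L m HLm). lra. }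
  assert (Hpx7 : d p x < a ^ 7 * scale L).
  { assert (Hk6 : a * scale k = a ^ 7 * scale (k + 6)).
    { replace k with (k + 6 - 6)%nat at 1 by lia. rewrite scale_sub by lia. simpl. ring. }
    assert (a ^ 7 * scale (k + 6) <= a ^ 7 * scale L)
      by (apply Rmult_le_compat_l; [apply pow_le; lra | apply scale_le, HL6]).
    nra. }
  pose proof (D1_le_near 7 x q L p k Hq Hp ltac:(lia) Hqx Hpx7) as Hnear.
  assert (INR (2 * 7 + k + 1) <= 16 + INR L)
    by (replace 16 with (INR 16) by (simpl; ring); rewrite <- plus_INR; apply le_INR; lia).
  lra.
Qed.

Lemma base_side_near x y z m w n p k g :
  filling_geodesic d a lam Xs (FVert (z, m)) (FVert (w, n)) g -> inS Xs (z, m) -> inS Xs (w, n) ->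
  d z x < scale m -> d w y < scale n -> scale m + scale n < scale 2 * d x y ->
  Xs k p -> d p x < 2 * scale k -> d p y < 2 * scale k -> (k <= m)%nat -> (k <= n)%nat ->
  scale (S k) < d x y ->
  dist_set_le D (FVert (p, k)) (segment D (FVert (z, m)) (FVert (w, n)) g) 80.
Proof.
  intros Hg Hzm Hwn Hzx Hwy Hsmall Hp Hpx Hpy Hkm Hkn Hsep.
  destruct (graph_dist_nat E (w, n) (z, m)) as [T HT].
  change (graph_dist E (w, n) (z, m)) with (D (w, n) (z, m)) in HT.
  assert (HTk : (T <= n - k + 1 + (m - k + 1))%nat).
  { apply INR_le. rewrite <- HT.
    exact (D1_le_through_center x y z m w n p k Hzm Hwn Hzx Hwy Hp Hpx Hpy Hkm Hkn). }
  destruct (lowest_vertex z m w n g T Hg HT) as [s [q [L [Hs [Hgs [Hq [HLm [HmnL [Hzq Hzqw]]]]]]]]].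
  set (c := INR (T + 2 * L - m - n)) in *.
  assert (Hc : 0 <= c <= 2 * INR (L - k) + 2).
  { split; [apply pos_INR |].
    replace (2 * INR (L - k) + 2) with (INR (2 * (L - k) + 2))
      by (rewrite plus_INR, mult_INR; simpl; ring).
    apply le_INR. lia. }
  assert (HL6 : (L <= k + 6)%nat).
  { (* [d x y] is at most [a^-m + a^-n] plus the displacements through [(q, L)]. *)
    apply lowest_level_bound.
    pose proof (d_triangle x z y). pose proof (d_triangle z q y). pose proof (d_triangle q w y).
    rewrite (d_sym x z), (d_sym w y) in *.
    assert (2 * a * scale L * (4 + c) <= 2 * a * scale L * (2 * INR (L - k) + 6))
      by (apply Rmult_le_compat_l; [pose proof (scale_pos L); pose proof a_ge_13_5; nra | lra]).
    pose proof four_scale_2_lt_1. pose proof (scale_pos 2).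
    assert (scale (S k) * (1 - scale 2) < d x y * (1 - scale 2)) by (apply Rmult_lt_compat_r; lra).
    nra. }
  assert (HsT : 0 <= s <= fdist D (FVert (z, m)) (FVert (w, n)))
    by (simpl fdist; rewrite HT; exact Hs).
  apply (dist_set_le_vertex _ _ (q, L) _ _ _ _ _ HsT Hgs).
  apply (Rle_trans _ 16); [| lra].
  exact (low_vertex_near x z m q L p k c Hq Hp HLm ltac:(lia) HL6 Hzx Hpx Hc Hzq).
Qed.

Lemma c_separated x y p k : in_c d a Xs x y (p, k) -> scale (S k) < d x y.
Proof.
  (* Otherwise a point of [X_(k+1)] near [x] would contradict the maximality of [k]. *)
  intros [_ [_ [_ Hmax]]]. apply Rnot_le_lt. intro Hle.
  destruct (net_point (S k) x) as [q [Hq Hqx]]. pose proof (scale_pos (S k)).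
  assert (S k <= k)%nat; [| lia].
  apply (Hmax (q, S k)); unfold inS, ball, Rdiv; cbn [fst snd]; fold (scale (S k)); auto.
  - lra.
  - pose proof (d_triangle q x y). lra.
Qed.

Lemma c_level_lt x y p k m : in_c d a Xs x y (p, k) -> scale m < scale 2 * d x y -> (k < m)%nat.
Proof.
  intros [_ [Hpx [Hpy _]]] Hm. unfold ball, Rdiv in Hpx, Hpy. cbn [fst snd] in Hpx, Hpy.
  fold (scale k) in Hpx, Hpy.
  destruct (Nat.le_gt_cases m k) as [Hmk |]; [exfalso | assumption].
  pose proof (scale_le m k Hmk). pose proof four_scale_2_lt_1. pose proof (scale_pos 2).
  pose proof (scale_pos k). pose proof (d_triangle x p y). rewrite (d_sym x p) in *. nra.
Qed.

Lemma c_approx_center x y z m w n u g1 g2 g3 :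
  inS Xs (z, m) -> inS Xs (w, n) -> d z x < scale m -> d w y < scale n ->
  scale m + scale n < scale 2 * d x y -> in_c d a Xs x y u ->
  filling_geodesic d a lam Xs (FVert v0) (FVert (z, m)) g1 ->
  filling_geodesic d a lam Xs (FVert (z, m)) (FVert (w, n)) g2 ->
  filling_geodesic d a lam Xs (FVert (w, n)) (FVert v0) g3 ->
  approx_center D 80 (FVert u) (FVert v0) (FVert (z, m)) (FVert (w, n)) g1 g2 g3.
Proof.
  intros Hzm Hwn Hzx Hwy Hsmall Hu H1 H2 H3. destruct u as [p k].
  pose proof (scale_pos m). pose proof (scale_pos n).
  assert (Hkm : (k < m)%nat) by (apply (c_level_lt x y p k m Hu); lra).
  assert (Hkn : (k < n)%nat) by (apply (c_level_lt x y p k n Hu); lra).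
  pose proof (c_separated x y p k Hu) as Hsep.
  destruct Hu as [Hp [Hpx [Hpy _]]]. unfold ball, Rdiv in Hpx, Hpy. cbn [fst snd] in *.
  fold (scale k) in Hpx, Hpy.
  split; [| split].
  - exact (root_side_near z m x p k g1 H1 Hzm Hzx Hp Hpx ltac:(lia)).
  - exact (base_side_near x y z m w n p k g2 H2 Hzm Hwn Hzx Hwy Hsmall Hp Hpx Hpy
             ltac:(lia) ltac:(lia) Hsep).
  - apply (dist_set_le_mono _ _ _ _ _ (segment_rev _ adj_sym (w, n) v0 g3)).
    exact (root_side_near w n y p k _ (geodesic_rev _ _ adj_sym _ _ _ H3)
             Hwn Hwy Hp Hpy ltac:(lia)).
Qed.

End Filling.

Theorem lemma2p6 (X : Type) (d : X -> X -> R) (a lam : R) (x0 : X)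
  (Xs : nat -> X -> Prop)
  (Hmet : is_metric d) (Hcpt : compact_space d) (Hdiam : diam_eq d (1 / 2))
  (Hal : lam <= a) (Hl2 : 2 <= lam) (Hla : 1 + a / (a - 1) <= lam)
  (Hfill : hyperbolic_filling d a x0 Xs)
  (x y z w : X) (m n : nat)
  (Hzm : inS Xs (z, m)) (Hwn : inS Xs (w, n))
  (Hx : ball d z (/ a ^ m) x) (Hy : ball d w (/ a ^ n) y)
  (Hsmall : / a ^ m + / a ^ n < / a ^ 2 * d x y)
  (u : X * nat) (Hu : in_c d a Xs x y u)
  (g1 g2 g3 : R -> fpoint (X * nat))
  (H1 : filling_geodesic d a lam Xs (FVert (x0, 0%nat)) (FVert (z, m)) g1)
  (H2 : filling_geodesic d a lam Xs (FVert (z, m)) (FVert (w, n)) g2)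
  (H3 : filling_geodesic d a lam Xs (FVert (w, n)) (FVert (x0, 0%nat)) g3) :
  approx_center (D1 d a lam Xs) 80 (FVert u)
    (FVert (x0, 0%nat)) (FVert (z, m)) (FVert (w, n)) g1 g2 g3.
Proof.
  exact (c_approx_center X d a lam x0 Xs Hmet Hl2 Hal Hla Hfill
           x y z m w n u g1 g2 g3 Hzm Hwn Hx Hy Hsmall Hu H1 H2 H3).
Qed.
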